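(* Let $n\ge 1$ and let $m\in\{3,5,6\}$ or $m=2^k$ for some integer $k\ge 2$. Then the grid graph $P_m\times P_n$ is odd prime.
   Context: All graphs are finite and simple. A graph $G$ of order $N$ is odd prime if there is a bijection $\ell:V(G)\to\{1,3,\ldots,2N-1\}$ with $\gcd(\ell(u),\ell(v))=1$ for every edge $uv$. $P_r$ denotes the path on $r$ vertices, and the grid graph $P_m\times P_n$ is the Cartesian product of $P_m$ and $P_n$: vertices $(a,b)$ with $1\le a\le m$, $1\le b\le n$, two vertices adjacent when they agree in one coordinate and differ by $1$ in the other. *)

From mathcomp Require Import all_boot.
Set Implicit Arguments. Unset Strict Implicit. Unset Printing Implicit Defensive.

(* Odd prime labeling: a bijection l : V -> {1,3,...,2N-1} (N = #|V|)
   such that gcd(l u, l v) = 1 for every edge uv. *)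
Definition odd_prime (T : finType) (e : rel T) : Prop :=
  exists l : T -> nat,
    injective l /\
    (forall v, odd (l v) /\ l v < 2 * #|T|) /\
    (forall u v, e u v -> coprime (l u) (l v)).

Definition grid_adj (m n : nat) : rel ('I_m * 'I_n) :=
  fun x y =>
    ((x.1 == y.1) && ((x.2.+1 == y.2 :> nat) || (y.2.+1 == x.2 :> nat))) ||
    ((x.2 == y.2) && ((x.1.+1 == y.1 :> nat) || (y.1.+1 == x.1 :> nat))).
Arguments grid_adj : clear implicits.

From mathcomp Require Import all_boot.
From mathcomp Require Import zify.

Set Implicit Arguments.
Unset Strict Implicit.
Unset Printing Implicit Defensive.

(* Label the vertex (a, b) of P_m x P_n by 2 (m b + f_(b mod p)(a)) + 1, where
   f_0, ..., f_(p-1) are permutations of {0, ..., m-1}; these labels are exactly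
   the odd numbers below 2mn.  Two odd numbers differing by a power of two are
   coprime, so the labeling is odd prime as soon as consecutive entries of each
   f_r differ by a power of two and m + f_(r+1)(a) - f_r(a) is a power of two.
   For m = 2^k the identity (p = 1) works, for m = 3, 5, 6 explicit tables do. *)

Definition pow2_step (u v : nat) : Prop := exists j, v = u + 2 ^ j.

Definition pow2_apart (u v : nat) : Prop := pow2_step u v \/ pow2_step v u.

Lemma coprime_addX2 x j : odd x -> coprime x (x + 2 ^ j).
Proof. by move=> x_odd; rewrite /coprime gcdnDl -/(coprime _ _) coprimeXr ?coprimen2. Qed.

Lemma pow2_apart_coprime u v : pow2_apart u v -> coprime u.*2.+1 v.*2.+1.
Proof.
have step_coprime x y : pow2_step x y -> coprime x.*2.+1 y.*2.+1.
  case=> j ->; have -> : (x + 2 ^ j).*2.+1 = x.*2.+1 + 2 ^ j.+1 by rewrite expnS; lia.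
  by rewrite coprime_addX2 //= odd_double.
by case=> /step_coprime //; rewrite coprime_sym.
Qed.

Section GridLabeling.

Variables (m p : nat) (f : nat -> nat -> nat).
Hypothesis p_gt0 : 0 < p.
Hypothesis f_lt : forall r a, r < p -> a < m -> f r a < m.
Hypothesis f_inj : forall r a a', r < p -> a < m -> a' < m -> f r a = f r a' -> a = a'.
Hypothesis f_row : forall r a, r < p -> a.+1 < m -> pow2_apart (f r a) (f r a.+1).
Hypothesis f_col : forall r a, r < p -> a < m -> pow2_step (f r a) (m + f (r.+1 %% p) a).

Let pos b a := m * b + f (b %% p) a.

Lemma grid_pos_lt n b a : b < n -> a < m -> pos b a < m * n.
Proof.
move=> b_lt a_lt; have := f_lt (ltn_pmod b p_gt0) a_lt.
have : m * b.+1 <= m * n by rewrite leq_mul2l b_lt orbT.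
rewrite /pos mulnS; lia.
Qed.

Lemma grid_pos_inj b b' a a' : a < m -> a' < m -> pos b a = pos b' a' -> b = b' /\ a = a'.
Proof.
move=> a_lt a'_lt eq_pos.
have m_gt0 : 0 < m by case: m a_lt.
have eq_b : b = b'.
  move/(congr1 (divn^~ m)): eq_pos; rewrite /pos !(mulnC m) !divnMDl //.
  by rewrite !divn_small ?addn0 ?f_lt ?ltn_pmod.
move: eq_pos; rewrite /pos -eq_b => /addnI eq_f.
by split; last exact: f_inj (ltn_pmod b p_gt0) a_lt a'_lt eq_f.
Qed.

Lemma grid_pos_row b a : a.+1 < m -> pow2_apart (pos b a) (pos b a.+1).
Proof.
move=> a_lt; case: (f_row (ltn_pmod b p_gt0) a_lt) => -[j eq_j]; [left | right];
  by exists j; rewrite /pos eq_j addnA.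
Qed.

Lemma grid_pos_col b a : a < m -> pow2_step (pos b a) (pos b.+1 a).
Proof.
move=> a_lt; have [j eq_j] := f_col (ltn_pmod b p_gt0) a_lt.
have mod_succ : b.+1 %% p = (b %% p).+1 %% p by rewrite -addn1 -modnDml addn1.
exists j; rewrite /pos mod_succ mulnS; lia.
Qed.

Theorem grid_odd_prime n : odd_prime (grid_adj m n).
Proof.
exists (fun x : 'I_m * 'I_n => (pos x.2 x.1).*2.+1); split; [|split].
- move=> [a b] [a' b'] /= /succn_inj /double_inj /grid_pos_inj[] // eq_b eq_a.
  by congr pair; apply: val_inj.
- move=> [a b] /=; rewrite odd_double card_prod !card_ord mul2n ltn_Sdouble.
  by split; last exact: grid_pos_lt.
move=> [a b] [a' b']; rewrite /grid_adj /=.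
case/orP=> /andP[/eqP eq_ab /orP[] /eqP adj]; apply: pow2_apart_coprime.
- by rewrite -eq_ab -adj; left; apply: grid_pos_col.
- by rewrite -eq_ab -adj; right; apply: grid_pos_col.
- by rewrite -eq_ab -adj; apply: grid_pos_row; rewrite adj.
- by rewrite -eq_ab -adj /pow2_apart or_comm; apply: grid_pos_row; rewrite adj.
Qed.

End GridLabeling.

Lemma pow2_grid_odd_prime k n : odd_prime (grid_adj (2 ^ k) n).
Proof.
apply: (@grid_odd_prime _ 1 (fun _ a => a)) => //.
- by move=> r a _ _; left; exists 0; rewrite addn1.
- by move=> r a _ _; exists k; rewrite addnC.
Qed.

Lemma cycle_nth (T : Type) (e : rel T) x0 s i : cycle e s -> i < size s ->
  e (nth x0 s i) (nth x0 s (i.+1 %% size s)).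
Proof.
rewrite (cycle_path x0) => /(pathP x0) e_s i_lt.
have [i_last | i_lt'] := eqVneq i.+1 (size s).
  have -> : i = (size s).-1 by rewrite -i_last.
  rewrite prednK ?modnn ?nth_last; last by rewrite -i_last.
  by apply: (e_s 0); rewrite -i_last.
have succ_i_lt : i.+1 < size s by rewrite ltn_neqAle i_lt' i_lt.
by rewrite modn_small //; apply: (e_s i.+1).
Qed.

Lemma all2_nth (S T : Type) (r : S -> T -> bool) x0 y0 s t i :
  all2 r s t -> i < size s -> r (nth x0 s i) (nth y0 t i).
Proof. by elim: s t i => [|x s IHs] [|y t] [|i] //= /andP[// _ /IHs]; apply. Qed.

Definition pow2_stepb (u v : nat) : bool := has (fun j => v == u + 2 ^ j) (iota 0 v.+1).

Lemma pow2_stepP u v : reflect (pow2_step u v) (pow2_stepb u v).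
Proof.
apply: (iffP hasP) => [[j _ /eqP ->] | [j ->]]; first by exists j.
exists j => //; rewrite mem_iota ltnS (leq_trans (ltnW (ltn_expl j (ltnSn 1)))) //.
exact: leq_addl.
Qed.

Definition pow2_apartb (u v : nat) : bool := pow2_stepb u v || pow2_stepb v u.

Lemma pow2_apartP u v : reflect (pow2_apart u v) (pow2_apartb u v).
Proof. by apply: (iffP orP) => -[] /pow2_stepP; [left | right | left | right]. Qed.

(* The rows of [T] are the permutations f_0, ..., f_(p-1), read cyclically. *)
Definition grid_table (m : nat) (T : seq (seq nat)) : bool :=
  [&& T != [::], all (perm_eq^~ (iota 0 m)) T, all (sorted pow2_apartb) T &
      cycle (all2 (fun u v => pow2_stepb u (m + v))) T].

Lemma grid_table_odd_prime m T n : grid_table m T -> odd_prime (grid_adj m n).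
Proof.
case/and4P=> T_nnil /allP T_perm /allP T_sorted T_cycle.
set row := nth [::] T.
have row_perm r : r < size T -> perm_eq (row r) (iota 0 m).
  by move=> r_lt; apply/T_perm/mem_nth.
have size_row r : r < size T -> size (row r) = m.
  by move/row_perm/perm_size; rewrite size_iota.
apply: (@grid_odd_prime m (size T) (fun r => nth 0 (row r))).
- by rewrite lt0n size_eq0.
- move=> r a r_lt a_lt; have := mem_nth 0 (_ : a < size (row r)).
  by rewrite (perm_mem (row_perm r r_lt)) mem_iota size_row //; apply.
- move=> r a a' r_lt a_lt a'_lt /eqP; rewrite nth_uniq ?size_row //.
    by move/eqP.
  by rewrite (perm_uniq (row_perm r r_lt)) iota_uniq.
- move=> r a r_lt a_lt; apply/pow2_apartP.
  have /(sortedP 0) row_sorted := T_sorted _ (mem_nth [::] r_lt).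
  by apply: row_sorted; rewrite size_row.
- move=> r a r_lt a_lt; apply/pow2_stepP.
  have /(all2_nth 0 0) rows_col := cycle_nth [::] T_cycle r_lt.
  by apply: rows_col; rewrite size_row.
Qed.

Theorem corollary3p11 (m n : nat) :
  1 <= n ->
  (m \in [:: 3; 5; 6]) \/ (exists k, 2 <= k /\ m = 2 ^ k) ->
  odd_prime (grid_adj m n).
Proof.
move=> _ [|[k [_ ->]]]; last exact: pow2_grid_odd_prime.
rewrite !inE => /or3P[] /eqP ->.
- by apply: (grid_table_odd_prime (T := [:: [:: 0; 1; 2]; [:: 1; 2; 0]; [:: 2; 0; 1]])).
- by apply: (grid_table_odd_prime (T := [:: [:: 0; 1; 3; 4; 2]; [:: 3; 4; 2; 0; 1];
    [:: 2; 0; 1; 3; 4]; [:: 1; 3; 4; 2; 0]; [:: 4; 2; 0; 1; 3]])).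
- by apply: (grid_table_odd_prime (T := [:: [:: 0; 1; 3; 2; 4; 5]; [:: 2; 3; 5; 4; 0; 1];
    [:: 4; 5; 1; 0; 2; 3]])).
Qed.
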